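(* There is an absolute constant $C$ such that the following holds. Let $n\ge 4$ be a power of $4$ and let $\mathcal{H}_1$ be as in the context. Let $1\le i<j\le n$, let $i$ lie in block $c_1$ and $j$ in block $c_2$ (possibly $c_1=c_2$), and let $r=\min(c_2-c_1,\ \sqrt{n}-(c_2-c_1))$. Then \[\sum_{d=0}^{\sqrt{n}-1}\mathbb{E}_{h\in\mathcal{H}_1}\left[h_{i+d\sqrt{n}}\,h_{j+d\sqrt{n}}\right]\ \le\ C\,\frac{\lg(r+2)}{(r+1)^2}.\]
   Context: $\lg$ is the base-2 logarithm. Let $n$ be a power of $4$, so $\sqrt{n}$ is an even integer; put $\ell=\sqrt{n}/2$. For $1\le c\le\sqrt n$, the $c$-th block is $\{(c-1)\sqrt n+1,\dots,c\sqrt n\}\subseteq[n]$. The random function $h:[n]\to\{-1,1\}$ drawn from $\mathcal{H}_1$ has mutually independent coordinates, with $\mathbb{P}[h_i=1]=\tfrac12+\tfrac{1}{2(\ell+1-c)}$ if $i$ lies in block $c\le \ell$, and $\mathbb{P}[h_i=1]=\tfrac12-\tfrac{1}{2(c-\ell)}$ if $i$ lies in block $c\ge \ell+1$ (so $\mathbb{E}h_i=\frac{1}{\ell+1-c}$, resp. $-\frac{1}{c-\ell}$). Indices are taken modulo $n$: $h_{i+n}=h_i$ for all integers $i$. *)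

From Stdlib Require Import Reals Arith.
Open Scope R_scope.

Definition lg (x : R) : R := ln x / ln 2.

Fixpoint rsum (f : nat -> R) (N : nat) : R :=
  match N with O => 0 | S N' => rsum f N' + f N' end.

Fixpoint rprod (f : nat -> R) (N : nat) : R :=
  match N with O => 1 | S N' => rprod f N' * f N' end.

(* Parameters: n = 4^k, sqrt n = s = 2^k, l = s/2 = 2^(k-1). *)
Definition nn (k : nat) : nat := 4 ^ k.
Definition sq (k : nat) : nat := 2 ^ k.
Definition ell (k : nat) : nat := Nat.div (sq k) 2.

(* block (1-indexed) of the 1-indexed position p in [n] *)
Definition block (k p : nat) : nat := Nat.div (p - 1) (sq k) + 1.

(* P[h_p = 1] for p in [n], per the definition of H_1 *)
Definition prob1 (k p : nat) : R :=
  let c := block k p in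
  if Nat.leb c (ell k)
  then / 2 + / (2 * INR (ell k + 1 - c))
  else / 2 - / (2 * INR (c - ell k)).

(* A point of {-1,1}^[n] is encoded by m in [0, 2^n): h_p = 1 iff bit (p-1) of m is set. *)
Definition redidx (k q : nat) : nat := Nat.modulo (q - 1) (nn k) + 1.

Definition hval (k m q : nat) : R :=
  if Nat.testbit m (redidx k q - 1) then 1 else -1.

Definition weight (k m : nat) : R :=
  rprod (fun t => if Nat.testbit m t then prob1 k (t + 1) else 1 - prob1 k (t + 1))
        (nn k).

(* E_{h ~ H_1} [h_a h_b]  (indices a, b >= 1, taken modulo n) *)
Definition Eprod (k a b : nat) : R :=
  rsum (fun m => weight k m * (hval k m a * hval k m b)) (2 ^ nn k).

From Stdlib Require Import Reals Arith Lia Lra.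
Open Scope R_scope.

(* Distinct coordinates of h are independent, so E[h_a h_b] = mu_a mu_b, where mu_c is the
   mean on block c: 1/(l+1-c) below the middle and -1/(c-l) above it.  Shifting i and j by
   d*sqrt n moves them to the same offsets in blocks c1+d and c2+d (cyclically), so the sum is
   the cyclic autocorrelation sum_x mu_x mu_(x+D) of the block means at lag D = c2-c1, which is
   symmetric under D <-> sqrt n - D.  For a lag r <= l, cut the cycle into four arcs: the two
   arcs where both factors have the same sign contribute at most 2 sum_x 1/((x+1)(x+1+r)),
   which telescopes to at most 2 H_r / r; the arc where the lower factor is positive and the
   shifted one negative contributes exactly -2 H_r/(r+1) by partial fractions; the wrap-around
   arc is non-positive.  Hence the sum is at most 2 H_r / (r (r+1)) = O(lg r / r^2). *)

Lemma rsum_ext f g N : (forall x, (x < N)%nat -> f x = g x) -> rsum f N = rsum g N.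
Proof.
  induction N; simpl; intros H; auto.
  rewrite IHN by (intros; apply H; lia); rewrite H by lia; auto.
Qed.

Lemma rprod_ext f g N : (forall x, (x < N)%nat -> f x = g x) -> rprod f N = rprod g N.
Proof.
  induction N; simpl; intros H; auto.
  rewrite IHN by (intros; apply H; lia); rewrite H by lia; auto.
Qed.

Lemma rsum_scal c f N : rsum (fun m => c * f m) N = c * rsum f N.
Proof. induction N; simpl; [|rewrite IHN]; ring. Qed.

Lemma rsum_add f g N : rsum (fun m => f m + g m) N = rsum f N + rsum g N.
Proof. induction N; simpl; [|rewrite IHN]; ring. Qed.

Lemma rsum_opp f N : rsum (fun x => - f x) N = - rsum f N.
Proof. induction N; simpl; [|rewrite IHN]; ring. Qed.

Lemma rsum_le f g N : (forall x, (x < N)%nat -> f x <= g x) -> rsum f N <= rsum g N.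
Proof.
  induction N; simpl; intros H; [lra|].
  pose proof (H N ltac:(lia)); pose proof (IHN ltac:(intros; apply H; lia)); lra.
Qed.

Lemma rsum_nonneg f N : (forall x, (x < N)%nat -> 0 <= f x) -> 0 <= rsum f N.
Proof.
  induction N; simpl; intros H; [lra|].
  pose proof (H N ltac:(lia)); pose proof (IHN ltac:(intros; apply H; lia)); lra.
Qed.

Lemma rsum_nonpos f N : (forall x, (x < N)%nat -> f x <= 0) -> rsum f N <= 0.
Proof.
  induction N; simpl; intros H; [lra|].
  pose proof (H N ltac:(lia)); pose proof (IHN ltac:(intros; apply H; lia)); lra.
Qed.

Lemma rprod_mul f g N : rprod (fun t => f t * g t) N = rprod f N * rprod g N.
Proof. induction N; simpl; [|rewrite IHN]; ring. Qed.

Lemma rsum_succ_l f N : rsum f (S N) = f O + rsum (fun t => f (S t)) N.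
Proof. induction N; simpl in *; [|rewrite IHN]; ring. Qed.

Lemma rprod_succ_l f N : rprod f (S N) = f O * rprod (fun t => f (S t)) N.
Proof. induction N; simpl in *; [|rewrite IHN]; ring. Qed.

Lemma rsum_add_range f a b : rsum f (a + b) = rsum f a + rsum (fun x => f (a + x)%nat) b.
Proof.
  induction b; simpl; [rewrite Nat.add_0_r; ring|].
  rewrite Nat.add_succ_r; simpl; rewrite IHb; ring.
Qed.

Lemma rsum_even_odd f M : rsum f (2 * M) = rsum (fun m => f (2 * m)%nat + f (2 * m + 1)%nat) M.
Proof.
  induction M; [simpl; ring|].
  replace (2 * S M)%nat with (S (S (2 * M))) by lia.
  change (rsum f (S (S (2 * M)))) with (rsum f (2 * M) + f (2 * M)%nat + f (S (2 * M))).
  rewrite IHM; change (rsum ?g (S M)) with (rsum g M + g M); cbv beta.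
  replace (2 * M + 1)%nat with (S (2 * M)) by lia; ring.
Qed.

Lemma rsum_rev f N : rsum f N = rsum (fun x => f (N - 1 - x)%nat) N.
Proof.
  induction N; [reflexivity|].
  change (rsum f (S N)) with (rsum f N + f N); rewrite rsum_succ_l, IHN, Rplus_comm.
  replace (S N - 1 - 0)%nat with N by lia.
  f_equal; apply rsum_ext; intros; f_equal; lia.
Qed.

Lemma rprod_single f a N : (a < N)%nat ->
  rprod (fun t => if Nat.eqb t a then f t else 1) N = f a.
Proof.
  induction N; intros Ha; [lia|]; simpl.
  destruct (Nat.eqb_spec N a) as [<-|HNa].
  - rewrite (rprod_ext _ (fun _ => 1)).
    + enough (rprod (fun _ => 1) N = 1) as -> by ring.
      clear; induction N; simpl; [|rewrite IHN]; ring.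
    + intros x Hx; destruct (Nat.eqb_spec x N); [lia|auto].
  - rewrite IHN by lia; ring.
Qed.

Lemma rsum_rprod_testbit N (F : nat -> bool -> R) :
  rsum (fun m => rprod (fun t => F t (Nat.testbit m t)) N) (2 ^ N)
  = rprod (fun t => F t true + F t false) N.
Proof.
  revert F; induction N; intros F; [simpl; ring|].
  rewrite Nat.pow_succ_r', rsum_even_odd, rprod_succ_l.
  rewrite (rsum_ext _ (fun m => (F O false + F O true) *
                                  rprod (fun t => F (S t) (Nat.testbit m t)) N)).
  - rewrite rsum_scal, (IHN (fun t => F (S t))); ring.
  - intros m _; rewrite !rprod_succ_l, Nat.testbit_even_0, Nat.testbit_odd_0.
    rewrite (rprod_ext (fun t => F (S t) (Nat.testbit (2 * m) (S t)))
                       (fun t => F (S t) (Nat.testbit m t)))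
      by (intros; rewrite Nat.testbit_even_succ by lia; auto).
    rewrite (rprod_ext (fun t => F (S t) (Nat.testbit (2 * m + 1) (S t)))
                       (fun t => F (S t) (Nat.testbit m t)))
      by (intros; rewrite Nat.testbit_odd_succ by lia; auto).
    ring.
Qed.

Definition sign (b : bool) : R := if b then 1 else -1.

Lemma rsum_bits_sign_pair N (p : nat -> R) a b :
  (a < N)%nat -> (b < N)%nat -> a <> b ->
  rsum (fun m => rprod (fun t => if Nat.testbit m t then p t else 1 - p t) N *
                 (sign (Nat.testbit m a) * sign (Nat.testbit m b))) (2 ^ N)
  = (2 * p a - 1) * (2 * p b - 1).
Proof.
  intros Ha Hb Hab.
  set (w t (bt : bool) := if bt then p t else 1 - p t).
  set (ind c t (x : R) := if Nat.eqb t c then x else 1).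
  transitivity (rsum (fun m => rprod (fun t => w t (Nat.testbit m t) *
     (ind a t (sign (Nat.testbit m t)) * ind b t (sign (Nat.testbit m t)))) N) (2 ^ N)).
  - apply rsum_ext; intros m _; unfold ind; rewrite !rprod_mul.
    rewrite (rprod_single (fun t => sign (Nat.testbit m t))),
            (rprod_single (fun t => sign (Nat.testbit m t))) by auto.
    reflexivity.
  - rewrite (rsum_rprod_testbit N
      (fun t bt => w t bt * (ind a t (sign bt) * ind b t (sign bt)))).
    rewrite (rprod_ext _ (fun t => ind a t (2 * p t - 1) * ind b t (2 * p t - 1))).
    + unfold ind; rewrite rprod_mul, !(rprod_single (fun t => 2 * p t - 1)) by auto.
      reflexivity.
    + intros t _; unfold w, ind, sign.
      destruct (Nat.eqb_spec t a), (Nat.eqb_spec t b); subst; try lia; ring.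
Qed.

Definition mean k p := 2 * prob1 k p - 1.

Lemma nn_pos k : (0 < nn k)%nat.
Proof. unfold nn; apply Nat.neq_0_lt_0, Nat.pow_nonzero; lia. Qed.

Lemma redidx_bounds k q : (1 <= redidx k q <= nn k)%nat.
Proof.
  unfold redidx; pose proof (nn_pos k).
  pose proof (Nat.mod_upper_bound (q - 1) (nn k) ltac:(lia)); lia.
Qed.

Lemma Eprod_distinct k a b : redidx k a <> redidx k b ->
  Eprod k a b = mean k (redidx k a) * mean k (redidx k b).
Proof.
  intros Hab; pose proof (redidx_bounds k a); pose proof (redidx_bounds k b).
  transitivity ((2 * prob1 k (redidx k a - 1 + 1) - 1) * (2 * prob1 k (redidx k b - 1 + 1) - 1)).
  - apply (rsum_bits_sign_pair (nn k) (fun t => prob1 k (t + 1))); lia.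
  - unfold mean; rewrite !Nat.sub_add by lia; reflexivity.
Qed.

Definition bmean k b : R :=
  if Nat.ltb b (ell k) then / INR (ell k - b) else - / INR (b + 1 - ell k).

Lemma bmean_lo k b : (b < ell k)%nat -> bmean k b = / INR (ell k - b).
Proof. intros H; unfold bmean; apply Nat.ltb_lt in H; rewrite H; reflexivity. Qed.

Lemma bmean_hi k b : (ell k <= b)%nat -> bmean k b = - / INR (b + 1 - ell k).
Proof. intros H; unfold bmean; apply Nat.ltb_ge in H; rewrite H; reflexivity. Qed.

Lemma mean_bmean k p : mean k p = bmean k (block k p - 1).
Proof.
  assert (Hc : (1 <= block k p)%nat) by (unfold block; lia).
  unfold mean, prob1; destruct (Nat.leb_spec (block k p) (ell k)).
  - rewrite bmean_lo by lia; replace (ell k - (block k p - 1))%nat with (ell k + 1 - block k p)%nat by lia.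
    rewrite Rinv_mult; lra.
  - rewrite bmean_hi by lia; replace (block k p - 1 + 1)%nat with (block k p) by lia.
    rewrite Rinv_mult; lra.
Qed.

Lemma sq_pos k : (0 < sq k)%nat.
Proof. unfold sq; apply Nat.neq_0_lt_0, Nat.pow_nonzero; lia. Qed.

Lemma nn_sq k : nn k = (sq k * sq k)%nat.
Proof. unfold nn, sq; rewrite <- Nat.pow_mul_l; reflexivity. Qed.

Lemma block_redidx_shift k i d : (1 <= i)%nat ->
  (block k (redidx k (i + d * sq k)) - 1 = ((i - 1) / sq k + d) mod sq k)%nat.
Proof.
  intros Hi; pose proof (sq_pos k); unfold block, redidx; rewrite nn_sq; set (s := sq k).
  assert (Hrem : ((i - 1) mod s < s)%nat) by (apply Nat.mod_upper_bound; lia).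
  replace (i + d * s - 1)%nat with ((i - 1) mod s + s * ((i - 1) / s + d))%nat
    by (pose proof (Nat.div_mod_eq (i - 1) s); nia).
  assert (Hdiv : forall r q, (r < s)%nat -> ((r + s * q) / s = q)%nat /\ ((r + s * q) mod s = r)%nat).
  { intros r q Hr; rewrite Nat.mul_comm, Nat.div_add, Nat.Div0.mod_add, Nat.div_small, Nat.mod_small by lia.
    split; reflexivity. }
  rewrite Nat.Div0.mod_mul_r, !Nat.add_sub.
  destruct (Hdiv ((i - 1) mod s) ((i - 1) / s + d)%nat Hrem) as [-> ->].
  pose proof (Nat.mod_upper_bound ((i - 1) / s + d) s ltac:(lia)).
  destruct (Hdiv ((i - 1) mod s) (((i - 1) / s + d) mod s) Hrem) as [-> _]; lia.
Qed.

Lemma mod_neq_of_lt x y n : (x < y)%nat -> (y - x < n)%nat -> x mod n <> y mod n.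
Proof.
  intros Hxy Hyx E; pose proof (Nat.div_mod_eq x n); pose proof (Nat.div_mod_eq y n).
  destruct (Nat.le_gt_cases (y / n) (x / n)); nia.
Qed.

Lemma rsum_mod_shift (G : nat -> R) a s : (0 < s)%nat ->
  rsum (fun d => G ((a + d) mod s)%nat) s = rsum G s.
Proof.
  intros Hs; rewrite (rsum_ext _ (fun d => G ((a mod s + d) mod s)%nat))
    by (intros; rewrite Nat.Div0.add_mod_idemp_l; auto).
  assert (Ha : (a mod s < s)%nat) by (apply Nat.mod_upper_bound; lia).
  set (b := a mod s) in *; clearbody b.
  pose proof (rsum_add_range (fun d => G ((b + d) mod s)%nat) (s - b) b) as Hl.
  pose proof (rsum_add_range G b (s - b)) as Hr.
  replace (s - b + b)%nat with s in Hl by lia; replace (b + (s - b))%nat with s in Hr by lia.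
  rewrite Hl, Hr, Rplus_comm; f_equal; apply rsum_ext; intros x Hx; f_equal.
  - replace (b + (s - b + x))%nat with (x + 1 * s)%nat by lia.
    rewrite Nat.Div0.mod_add; apply Nat.mod_small; lia.
  - apply Nat.mod_small; lia.
Qed.

Definition corr k D := rsum (fun x => bmean k x * bmean k ((x + D) mod sq k)) (sq k).

Lemma shifted_sum_corr k i j : (1 <= i)%nat -> (i < j)%nat -> (j <= nn k)%nat ->
  rsum (fun d => Eprod k (i + d * sq k) (j + d * sq k)) (sq k) = corr k (block k j - block k i).
Proof.
  intros Hi Hij Hj; pose proof (sq_pos k); set (s := sq k) in *.
  assert (Hq : ((i - 1) / s <= (j - 1) / s)%nat) by (apply Nat.Div0.div_le_mono; lia).
  set (D := (block k j - block k i)%nat).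
  set (G x := bmean k x * bmean k ((x + D) mod s)%nat).
  transitivity (rsum (fun d => G (((i - 1) / s + d) mod s)%nat) s).
  2: apply rsum_mod_shift; lia.
  apply rsum_ext; intros d Hd; unfold G; rewrite Eprod_distinct.
  - rewrite !mean_bmean; unfold s; rewrite !block_redidx_shift by lia; fold s.
    rewrite Nat.Div0.add_mod_idemp_l; do 3 f_equal; unfold D, block; fold s; lia.
  - unfold redidx; intros E; apply (mod_neq_of_lt (i + d * s - 1) (j + d * s - 1) (nn k)); lia.
Qed.

Lemma corr_sym k D : (D <= sq k)%nat -> corr k D = corr k (sq k - D).
Proof.
  intros HD; pose proof (sq_pos k); unfold corr; set (s := sq k) in *.
  set (G y := bmean k y * bmean k ((y + (s - D)) mod s)%nat).
  rewrite <- (rsum_mod_shift G D s) by lia.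
  apply rsum_ext; intros x Hx; unfold G; rewrite Rmult_comm; f_equal.
  - rewrite Nat.add_comm; reflexivity.
  - f_equal; rewrite Nat.Div0.add_mod_idemp_l.
    replace (D + x + (s - D))%nat with (x + 1 * s)%nat by lia.
    rewrite Nat.Div0.mod_add, Nat.mod_small; lia.
Qed.

Lemma sq_ell k : (1 <= k)%nat -> sq k = (2 * ell k)%nat /\ (1 <= ell k)%nat.
Proof.
  intros Hk; unfold ell, sq; replace k with (S (k - 1)) by lia.
  rewrite Nat.pow_succ_r', Nat.mul_comm, Nat.div_mul by lia.
  pose proof (Nat.pow_nonzero 2 (k - 1)); lia.
Qed.

Definition harm r := rsum (fun b => / INR (b + 1)) r.

Definition recip_pair r x := / INR (x + 1) * / INR (x + 1 + r).

Lemma inv_INR_pos n : (0 < n)%nat -> 0 < / INR n.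
Proof. intros; apply Rinv_0_lt_compat, lt_0_INR; lia. Qed.

Lemma corr_le_arcs k r : (1 <= k)%nat -> (r <= ell k)%nat ->
  corr k r <= 2 * rsum (recip_pair r) (ell k - r)
              - rsum (fun x => / INR (r - x) * / INR (x + 1)) r.
Proof.
  intros Hk Hr; destruct (sq_ell k Hk) as [Hs Hl]; unfold corr; rewrite Hs.
  set (L := (ell k - r)%nat).
  replace (2 * ell k)%nat with (L + r + L + r)%nat by lia; rewrite !rsum_add_range.
  assert (Hlow : rsum (fun x => bmean k x * bmean k ((x + r) mod (L + r + L + r))) L
                 = rsum (recip_pair r) L).
  { rewrite rsum_rev; apply rsum_ext; intros x Hx; rewrite Nat.mod_small by lia.
    rewrite !bmean_lo by lia; unfold recip_pair; rewrite Rmult_comm.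
    do 3 f_equal; lia. }
  assert (Hmixed : rsum (fun x => bmean k (L + x) * bmean k ((L + x + r) mod (L + r + L + r))) r
                   = - rsum (fun x => / INR (r - x) * / INR (x + 1)) r).
  { rewrite <- rsum_opp; apply rsum_ext; intros x Hx; rewrite Nat.mod_small by lia.
    rewrite bmean_lo, bmean_hi by lia.
    replace (ell k - (L + x))%nat with (r - x)%nat by lia.
    replace (L + x + r + 1 - ell k)%nat with (x + 1)%nat by lia; ring. }
  assert (Hhigh : rsum (fun x => bmean k (L + r + x)
                        * bmean k ((L + r + x + r) mod (L + r + L + r))) L
                  = rsum (recip_pair r) L).
  { apply rsum_ext; intros x Hx; rewrite Nat.mod_small by lia.
    rewrite !bmean_hi by lia; unfold recip_pair.
    replace (L + r + x + 1 - ell k)%nat with (x + 1)%nat by lia.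
    replace (L + r + x + r + 1 - ell k)%nat with (x + 1 + r)%nat by lia; ring. }
  assert (Hwrap : rsum (fun x => bmean k (L + r + L + x)
                        * bmean k ((L + r + L + x + r) mod (L + r + L + r))) r <= 0).
  { apply rsum_nonpos; intros x Hx.
    replace (L + r + L + x + r)%nat with (x + 1 * (L + r + L + r))%nat by lia.
    rewrite Nat.Div0.mod_add, Nat.mod_small by lia.
    rewrite bmean_hi, bmean_lo by lia.
    pose proof (inv_INR_pos (L + r + L + x + 1 - ell k) ltac:(lia)).
    pose proof (inv_INR_pos (ell k - x) ltac:(lia)); nra. }
  rewrite Hlow, Hmixed, Hhigh; lra.
Qed.

Lemma rsum_recip_pair_telescope r L : (1 <= r)%nat ->
  INR r * rsum (recip_pair r) L + rsum (fun b => / INR (L + 1 + b)) r = harm r.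
Proof.
  intros Hr; induction L.
  - rewrite Rmult_0_r, Rplus_0_l; apply rsum_ext; intros; do 2 f_equal; lia.
  - rewrite <- IHL; simpl rsum at 1; rewrite Rmult_plus_distr_l.
    assert (Hshift : rsum (fun b => / INR (L + 1 + b)) (S r)
                     = / INR (L + 1) + rsum (fun b => / INR (S L + 1 + b)) r).
    { rewrite rsum_succ_l, Nat.add_0_r; f_equal; apply rsum_ext; intros; do 2 f_equal; lia. }
    change (rsum ?f (S r)) with (rsum f r + f r) in Hshift; cbv beta in Hshift.
    assert (Hterm : INR r * recip_pair r L = / INR (L + 1) - / INR (L + 1 + r)).
    { unfold recip_pair; rewrite !plus_INR; simpl INR.
      pose proof (pos_INR L); pose proof (le_INR 1 r ltac:(lia)); simpl INR in *; field; lra. }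
    lra.
Qed.

Lemma rsum_recip_pair_le r L : (1 <= r)%nat -> rsum (recip_pair r) L <= harm r / INR r.
Proof.
  intros Hr; pose proof (rsum_recip_pair_telescope r L Hr).
  assert (0 <= rsum (fun b => / INR (L + 1 + b)) r)
    by (apply rsum_nonneg; intros; apply Rlt_le, inv_INR_pos; lia).
  pose proof (le_INR 1 r ltac:(lia)); simpl INR in *.
  apply Rmult_le_reg_l with (INR r); [lra|].
  unfold Rdiv; rewrite (Rmult_comm (harm r)), <- Rmult_assoc, Rinv_r by lra; lra.
Qed.

(* Partial fractions: 1/((r-x)(x+1)) = (1/(x+1) + 1/(r-x)) / (r+1). *)
Lemma rsum_recip_complement r :
  rsum (fun x => / INR (r - x) * / INR (x + 1)) r = 2 * harm r / INR (r + 1).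
Proof.
  rewrite (rsum_ext _ (fun x => / INR (r + 1) * (/ INR (x + 1) + / INR (r - x)))).
  - rewrite rsum_scal, rsum_add; fold (harm r).
    replace (rsum (fun x => / INR (r - x)) r) with (harm r).
    + field; apply not_0_INR; lia.
    + rewrite rsum_rev; apply rsum_ext; intros; do 2 f_equal; lia.
  - intros x Hx; rewrite minus_INR, !plus_INR by lia; simpl INR.
    pose proof (le_INR (x + 1) r ltac:(lia)); rewrite plus_INR in *; simpl INR in *.
    pose proof (pos_INR x); field; lra.
Qed.

Lemma ln_ge_1_sub_inv y : 0 < y -> 1 - / y <= ln y.
Proof.
  intros Hy; pose proof (exp_ineq1_le (ln (/ y))) as E.
  rewrite exp_ln, ln_Rinv in E by (try apply Rinv_0_lt_compat; lra); lra.
Qed.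

Lemma harm_le_ln r : harm r <= 2 * ln (INR r + 1).
Proof.
  induction r.
  - unfold harm; simpl; rewrite Rplus_0_l, ln_1; lra.
  - unfold harm in *; simpl rsum; rewrite S_INR, plus_INR; simpl INR.
    pose proof (pos_INR r).
    pose proof (ln_ge_1_sub_inv ((INR r + 1 + 1) / (INR r + 1)) ltac:(apply Rdiv_lt_0_compat; lra)).
    unfold Rdiv in *; rewrite ln_mult, ln_Rinv in * by (try apply Rinv_0_lt_compat; lra).
    assert (1 - / ((INR r + 1 + 1) * / (INR r + 1)) = / (INR r + 1 + 1)) as E by (field; lra).
    assert (/ (INR r + 1) <= 2 * / (INR r + 1 + 1)).
    { apply Rmult_le_reg_l with ((INR r + 1) * (INR r + 1 + 1)); [nra|].
      field_simplify; lra. }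
    lra.
Qed.

Lemma corr_le_harm k r : (1 <= k)%nat -> (1 <= r <= ell k)%nat ->
  corr k r <= 2 * harm r / (INR r * (INR r + 1)).
Proof.
  intros Hk Hr; pose proof (corr_le_arcs k r Hk ltac:(lia)) as Harcs.
  rewrite rsum_recip_complement, plus_INR in Harcs; simpl INR in Harcs.
  pose proof (rsum_recip_pair_le r (ell k - r) ltac:(lia)).
  pose proof (le_INR 1 r ltac:(lia)); simpl INR in *.
  replace (2 * harm r / (INR r * (INR r + 1))) with (2 * (harm r / INR r) - 2 * harm r / (INR r + 1))
    by (field; lra).
  lra.
Qed.

Lemma corr0_le k : (1 <= k)%nat -> corr k 0 <= 4.
Proof.
  intros Hk; pose proof (corr_le_arcs k 0 Hk ltac:(lia)) as Harcs; simpl rsum in Harcs.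
  assert (H1 : rsum (recip_pair 1) (ell k) <= 1).
  { pose proof (rsum_recip_pair_le 1 (ell k) ltac:(lia)).
    unfold harm in *; simpl in *; lra. }
  assert (rsum (recip_pair 0) (ell k) <= 2 * rsum (recip_pair 1) (ell k)).
  { rewrite <- rsum_scal; apply rsum_le; intros x _; unfold recip_pair.
    rewrite !plus_INR; simpl INR; pose proof (pos_INR x).
    apply Rmult_le_reg_l with ((INR x + 1) * (INR x + 1) * (INR x + 1 + 1)); [nra|].
    field_simplify; lra. }
  rewrite Nat.sub_0_r in Harcs; lra.
Qed.

Lemma ln_le_lg x : 1 <= x -> ln x <= lg x.
Proof.
  intros Hx; unfold lg.
  assert (Hln : 0 < ln 2 <= 1).
  { pose proof ln_lt_2; pose proof (exp_ineq1 1 ltac:(lra)).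
    pose proof (ln_increasing 2 (exp 1) ltac:(lra) ltac:(lra)); rewrite ln_exp in *; lra. }
  assert (0 <= ln x).
  { rewrite <- ln_1; destruct (Rle_lt_or_eq_dec 1 x Hx) as [H|<-]; [|lra].
    apply Rlt_le, ln_increasing; lra. }
  apply Rmult_le_reg_l with (ln 2); [lra|].
  field_simplify; nra.
Qed.

Lemma corr_le_lg k r : (1 <= k)%nat -> (r <= ell k)%nat ->
  corr k r <= 8 * lg (INR r + 2) / (INR r + 1) ^ 2.
Proof.
  intros Hk Hr; destruct (Nat.eq_dec r 0) as [->|Hr0].
  - pose proof (corr0_le k Hk); simpl INR.
    replace (lg (0 + 2)) with 1 by (unfold lg; rewrite Rplus_0_l; field; apply ln_neq_0; lra).
    lra.
  - pose proof (corr_le_harm k r Hk ltac:(lia)).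
    pose proof (harm_le_ln r); pose proof (le_INR 1 r ltac:(lia)); simpl INR in *.
    assert (0 <= harm r) by (apply rsum_nonneg; intros; apply Rlt_le, inv_INR_pos; lia).
    assert (ln (INR r + 1) <= lg (INR r + 2)).
    { pose proof (ln_le_lg (INR r + 2) ltac:(lra)).
      pose proof (ln_increasing (INR r + 1) (INR r + 2) ltac:(lra) ltac:(lra)); lra. }
    (* 1/r <= 2/(r+1) for r >= 1 *)
    assert (2 * harm r / (INR r * (INR r + 1)) <= 4 * harm r / (INR r + 1) ^ 2).
    { apply Rmult_le_reg_l with (INR r * (INR r + 1) ^ 2); [nra|].
      field_simplify; [nra|lra..]. }
    assert (4 * harm r / (INR r + 1) ^ 2 <= 8 * lg (INR r + 2) / (INR r + 1) ^ 2).
    { unfold Rdiv; apply Rmult_le_compat_r; [apply Rlt_le, Rinv_0_lt_compat; nra|lra]. }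
    lra.
Qed.

Theorem lemma2p1 :
  exists C : R,
  forall (k i j : nat),
    (1 <= k)%nat -> (1 <= i)%nat -> (i < j)%nat -> (j <= nn k)%nat ->
    let c1 := block k i in
    let c2 := block k j in
    let r := Nat.min (c2 - c1) (sq k - (c2 - c1)) in
    rsum (fun d => Eprod k (i + d * sq k) (j + d * sq k)) (sq k)
      <= C * lg (INR r + 2) / (INR r + 1) ^ 2.
Proof.
  exists 8; intros k i j Hk Hi Hij Hj c1 c2 r.
  rewrite shifted_sum_corr by lia; fold c1 c2.
  destruct (sq_ell k Hk) as [Hs Hl].
  assert (Hc2 : (c2 <= sq k)%nat).
  { unfold c2, block; enough ((j - 1) / sq k < sq k)%nat by lia.
    apply Nat.Div0.div_lt_upper_bound; rewrite <- nn_sq; lia. }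
  destruct (Nat.le_gt_cases (c2 - c1) (ell k)).
  - replace r with (c2 - c1)%nat by lia; apply corr_le_lg; lia.
  - rewrite corr_sym by lia; replace r with (sq k - (c2 - c1))%nat by lia.
    apply corr_le_lg; lia.
Qed.
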